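(* Let $T\ge 2$, $U$ a finite set of men and $W_1\subseteq W_2\subseteq\cdots\subseteq W_T$ finite sets of women, each man having a strict total order over $W_T$ and each woman a strict total order over $U$. Let $\Delta_t$ denote the set of stable matchings of $(U,W_t)$. Let $(M_1,\dots,M_T)\in\prod_{t=1}^T\Delta_t$ and let $M_1'\in\Delta_1$ be such that $M_1'$ men-dominates $M_1$. Then there exists $(M_2',\dots,M_T')\in\prod_{t=2}^T\Delta_t$ such that $\sum_{t=1}^{T-1}|M_t'\setminus M_{t+1}'|\le\sum_{t=1}^{T-1}|M_t\setminus M_{t+1}|$.
   Context: A matching is a set of man–woman pairs with each person in at most one pair; preferences in a sub-instance are restrictions of the given ones. A blocking pair of $M$ is a pair $(u,w)\notin M$ with ($u$ unmatched or preferring $w$ to his partner) and ($w$ unmatched or preferring $u$ to her partner); stable means no blocking pair. $M$ men-dominates $M'$ (both stable matchings of the same instance) if every man's partner in $M$ is at least as good for him as his partner in $M'$. *)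

From mathcomp Require Import all_boot.
Set Implicit Arguments. Unset Strict Implicit. Unset Printing Implicit Defensive.

Section Marriage.
Variables (U W : finType).

(* strict total order on a type, given as a boolean relation "x is preferred to y" *)
Definition strict_total_order (T : finType) (r : rel T) :=
  irreflexive r /\ transitive r /\ (forall x y, x != y -> r x y || r y x).

Definition is_matching (Wt : {set W}) (M : {set U * W}) :=
  (forall p, p \in M -> p.2 \in Wt) /\
  (forall p q, p \in M -> q \in M -> p.1 = q.1 -> p = q) /\
  (forall p q, p \in M -> q \in M -> p.2 = q.2 -> p = q).

Definition man_wants (prefM : U -> rel W) (M : {set U * W}) (u : U) (w : W) :=
  (forall w', (u, w') \notin M) \/ (exists w', (u, w') \in M /\ prefM u w w').

Definition woman_wants (prefW : W -> rel U) (M : {set U * W}) (w : W) (u : U) :=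
  (forall u', (u', w) \notin M) \/ (exists u', (u', w) \in M /\ prefW w u u').

Definition blocking_pair prefM prefW (Wt : {set W}) (M : {set U * W}) (u : U) (w : W) :=
  w \in Wt /\ (u, w) \notin M /\ man_wants prefM M u w /\ woman_wants prefW M w u.

Definition stable prefM prefW (Wt : {set W}) (M : {set U * W}) :=
  is_matching Wt M /\ forall u w, ~ blocking_pair prefM prefW Wt M u w.

(* M men-dominates M': each man's partner in M is at least as good as in M'
   (being unmatched is worst, being matched to w counts as at least as good as w) *)
Definition men_dominates (prefM : U -> rel W) (M M' : {set U * W}) :=
  forall u w', (u, w') \in M' ->
    exists w, (u, w) \in M /\ (w = w' \/ prefM u w w').

End Marriage.

From mathcomp Require Import all_boot.
Set Implicit Arguments. Unset Strict Implicit. Unset Printing Implicit Defensive.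

(* Given a stable matching B of (U, Wb) and a stable matching C of (U, Wc)
   with Wb a subset of Wc, call a man an improver if he prefers his B-partner
   to his situation in C.  The women of the improvers are held in C by
   improvers, and by counting each improver is matched in C to such a woman.
   Hence "improvers keep B, everybody else keeps C" is a stable matching of
   (U, Wc) that men-dominates C.  Every pair it drops from B belongs to a man
   who strictly prefers his C-partner; if B men-dominates a stable matching A
   of (U, Wb), that man's A-partner is therefore not his C-partner, so these
   dropped pairs inject into A minus C.  Iterating the construction along
   t = 2, ..., T gives the required sequence, term by term no more costly. *)

Section StrictTotalOrder.
Variables (T : finType) (r : rel T).
Hypothesis r_sto : strict_total_order r.

Lemma strict_total_irr x : ~~ r x x.
Proof. by case: r_sto => irr _; rewrite irr. Qed.

Lemma strict_total_trans : transitive r.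
Proof. by case: r_sto => _ []. Qed.

Lemma strict_totalN x y : x != y -> ~~ r x y -> r y x.
Proof. by case: r_sto => _ [_ tot] /tot; case: (r x y). Qed.

End StrictTotalOrder.

Section MatchingCard.
Variables (U W : finType) (Wt : {set W}) (M : {set U * W}).
Hypothesis M_matching : is_matching Wt M.

Lemma card_matching_men (P : {set U * W}) :
  P \subset M -> #|[set p.1 | p in P]| = #|P|.
Proof.
case: M_matching => _ [inj1 _] /subsetP sPM; apply: card_in_imset => p q Pp Pq.
exact: inj1 (sPM _ Pp) (sPM _ Pq).
Qed.

Lemma card_matching_women (P : {set U * W}) :
  P \subset M -> #|[set p.2 | p in P]| = #|P|.
Proof.
case: M_matching => _ [_ inj2] /subsetP sPM; apply: card_in_imset => p q Pp Pq.
exact: inj2 (sPM _ Pp) (sPM _ Pq).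
Qed.

End MatchingCard.

Section Marriage.
Variables (U W : finType) (prefM : U -> rel W) (prefW : W -> rel U).
Hypothesis prefM_sto : forall u, strict_total_order (prefM u).
Hypothesis prefW_sto : forall w, strict_total_order (prefW w).
Implicit Types (A B C M : {set U * W}) (Wt : {set W}).

Lemma man_wants_notin Wt M u w :
  is_matching Wt M -> man_wants prefM M u w -> (u, w) \notin M.
Proof.
move=> [_ [inj1 _]] [// | [w' [uw' pref]]]; apply/negP=> uw.
by case: (inj1 _ _ uw uw' erefl) pref => ->; rewrite (negbTE (strict_total_irr _ _)).
Qed.

Lemma not_man_wants M u w :
  ~ man_wants prefM M u w -> exists2 w', (u, w') \in M & ~~ prefM u w w'.
Proof.
move=> nwant; have [/existsP[w' uw'] | /existsPn unm] := boolP [exists w', (u, w') \in M].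
  by exists w' => //; apply/negP=> pref; apply: nwant; right; exists w'.
by case: nwant; left.
Qed.

Lemma not_woman_wants M w u :
  ~ woman_wants prefW M w u -> exists2 u', (u', w) \in M & ~~ prefW w u u'.
Proof.
move=> nwant; have [/existsP[u' u'w] | /existsPn unm] := boolP [exists u', (u', w) \in M].
  by exists u' => //; apply/negP=> pref; apply: nwant; right; exists u'.
by case: nwant; left.
Qed.

Definition man_wantsb M u w :=
  [forall w', (u, w') \notin M] || [exists w', ((u, w') \in M) && prefM u w w'].

Lemma man_wantsP M u w : reflect (man_wants prefM M u w) (man_wantsb M u w).
Proof.
apply: (iffP orP) => [[/forallP unm | /existsP[w' /andP[uw' pref]]] | [unm | [w' [uw' pref]]]].
- by left.
- by right; exists w'.
- by left; apply/forallP.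
- by right; apply/existsP; exists w'; rewrite uw'.
Qed.

Definition improvers B C : {set U} :=
  [set u | [exists w, ((u, w) \in B) && man_wantsb C u w]].

Lemma improversP B C u :
  reflect (exists2 w, (u, w) \in B & man_wants prefM C u w) (u \in improvers B C).
Proof.
rewrite inE; apply: (iffP existsP) => [[w /andP[uw /man_wantsP want]] | [w uw /man_wantsP want]].
  by exists w.
by exists w; rewrite uw.
Qed.

Section Join.
Variables (Wb Wc : {set W}) (B C : {set U * W}).
Hypothesis B_stable : stable prefM prefW Wb B.
Hypothesis C_stable : stable prefM prefW Wc C.
Hypothesis sub_WbWc : Wb \subset Wc.

Let S := improvers B C.

Lemma improver_woman_held_by_improver u w :
  u \in S -> (u, w) \in B -> exists2 v, v \in S & (v, w) \in C.
Proof.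
case: B_stable C_stable => [[B_W [B_inj1 B_inj2]] B_noblock] [C_match C_noblock].
move=> /improversP[w0 uw0 want] uw.
case: (B_inj1 _ _ uw0 uw erefl) want => -> {w0 uw0} want.
have w_Wb : w \in Wb := B_W _ uw.
have nwant_w : ~ woman_wants prefW C w u.
  move=> wwant; apply: (C_noblock u w); split; first exact: (subsetP sub_WbWc).
  by split; [exact: man_wants_notin C_match want | split].
have [v vw pref_vu] := not_woman_wants nwant_w.
have vNu : v != u by apply: contraTneq vw => ->; exact: man_wants_notin C_match want.
have w_prefers_v : prefW w v u by rewrite (strict_totalN (prefW_sto w)) // eq_sym.
have vwNB : (v, w) \notin B by apply: contra vNu => /B_inj2 /(_ uw erefl) [->].
have nwant_v : ~ man_wants prefM B v w.
  move=> vwant; apply: (B_noblock v w); do !split => //.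
  by right; exists u.
have [w2 vw2 pref_w2] := not_man_wants nwant_v.
have w2Nw : w2 != w by apply: contraTneq vw2 => ->.
exists v => //; apply/improversP; exists w2 => //; right; exists w; split=> //.
by rewrite (strict_totalN (prefM_sto v)) // eq_sym.
Qed.

(* The map sending an improver to the C-partner of his B-partner is injective
   from S into S, hence onto. *)
Lemma improver_matched_in_C u :
  u \in S -> exists2 w, (u, w) \in C & exists2 x, x \in S & (x, w) \in B.
Proof.
case: B_stable C_stable => [B_match _] [C_match _] uS.
have [_ [_ C_inj2]] := C_match.
pose BS := [set p in B | p.1 \in S].
pose CS := [set p in C | p.2 \in [set q.2 | q in BS]].
have menBS : [set p.1 | p in BS] = S.
  apply/setP=> x; apply/imsetP/idP => [[p] | xS]; first by rewrite inE => /andP[_ ?] ->.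
  by case/improversP: (xS) => w xw _; exists (x, w); rewrite // inE xw.
have womenCS : [set p.2 | p in CS] = [set q.2 | q in BS].
  apply/setP=> w; apply/imsetP/idP => [[p] | /imsetP[[x w'] xwBS ->]].
    by rewrite inE => /andP[_ ?] ->.
  move: (xwBS); rewrite inE /= => /andP[xw xS].
  have [v _ vw] := improver_woman_held_by_improver xS xw.
  by exists (v, w'); rewrite // inE vw; apply/imsetP; exists (x, w').
have menCS_sub : [set p.1 | p in CS] \subset S.
  apply/subsetP=> _ /imsetP[[v w] /setIdP[vw /imsetP[[x w'] /setIdP[xw xS] /= ew]] ->].
  rewrite -ew in xw; have [v' v'S v'w] := improver_woman_held_by_improver xS xw.
  by case: (C_inj2 _ _ v'w vw erefl) v'S => ->.
have menCS : [set p.1 | p in CS] = S.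
  have sub_BS : BS \subset B by apply/subsetP=> p /setIdP[].
  have sub_CS : CS \subset C by apply/subsetP=> p /setIdP[].
  apply/eqP; rewrite eqEcard menCS_sub /= (card_matching_men C_match sub_CS).
  rewrite -(card_matching_women C_match sub_CS) womenCS.
  by rewrite (card_matching_women B_match sub_BS) -(card_matching_men B_match sub_BS) menBS.
have /imsetP[[u' w] /setIdP[uw /imsetP[[x w'] /setIdP[xw xS] /= ew]] ->] :
  u \in [set p.1 | p in CS] by rewrite menCS.
by exists w => //; exists x => //; rewrite ew.
Qed.

Definition join : {set U * W} :=
  [set p | if p.1 \in S then p \in B else p \in C].

Lemma in_join u w : ((u, w) \in join) = if u \in S then (u, w) \in B else (u, w) \in C.
Proof. by rewrite inE. Qed.

Lemma join_matching : is_matching Wc join.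
Proof.
case: B_stable C_stable => [[B_W [B_inj1 B_inj2]] _] [[C_W [C_inj1 C_inj2]] _].
have mixed u v w : u \in S -> (u, w) \in B -> (v, w) \in C -> v \in S.
  move=> uS uw vw; have [v' v'S v'w] := improver_woman_held_by_improver uS uw.
  by case: (C_inj2 _ _ v'w vw erefl) v'S => ->.
split; [|split].
- move=> [u w]; rewrite in_join; case: ifP => _ uw; last exact: C_W uw.
  exact: (subsetP sub_WbWc) (B_W _ uw).
- move=> [u w] [v w']; rewrite !in_join /= => + + euv; rewrite -euv.
  by case: ifP => _ uw uw'; [apply: B_inj1 uw uw' _ | apply: C_inj1 uw uw' _].
- move=> [u w] [v w']; rewrite !in_join /= => + + ew; rewrite -ew.
  case: ifPn => uS; case: ifPn => vS uw vw.
  + exact: B_inj2 uw vw _.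
  + by rewrite (mixed _ _ _ uS uw vw) in vS.
  + by rewrite (mixed _ _ _ vS vw uw) in uS.
  + exact: C_inj2 uw vw _.
Qed.

Lemma join_man_wants u w :
  man_wants prefM join u w -> man_wants prefM B u w /\ man_wants prefM C u w.
Proof.
have [_ [J_inj1 _]] := join_matching.
have [_ [C_inj1 _]] := C_stable.1.
case: (boolP (u \in S)) => uS want.
  have [w0 uw0 wantC] := improversP _ _ _ uS.
  have uw0J : (u, w0) \in join by rewrite in_join uS.
  case: want => [/(_ w0) | [w' [uw'J pref]]]; first by rewrite uw0J.
  case: (J_inj1 _ _ uw'J uw0J erefl) pref => -> pref.
  split; first by right; exists w0.
  case: wantC => [unm | [c [uc pref_c]]]; first by left.
  by right; exists c; split=> //; apply: strict_total_trans (prefM_sto u) _ _ _ pref pref_c.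
have notwantC b : (u, b) \in B -> ~ man_wants prefM C u b.
  by move=> ub wantC; move/negP: uS; apply; apply/improversP; exists b.
case: want => [unmJ | [w' [uw'J pref]]].
  have unmC c : (u, c) \notin C by move: (unmJ c); rewrite in_join (negbTE uS).
  split; last by left.
  by left=> b; apply/negP=> ub; apply: (notwantC b ub); left.
have uw' : (u, w') \in C by move: uw'J; rewrite in_join (negbTE uS).
split; last by right; exists w'.
have [/existsP[b ub] | /existsPn unmB] := boolP [exists b, (u, b) \in B]; last by left.
right; exists b; split=> //; have [-> // | bNw'] := eqVneq b w'.
apply: strict_total_trans (prefM_sto u) _ _ _ pref _; apply: (strict_totalN (prefM_sto u) bNw').
by apply/negP=> pref_b; apply: (notwantC b ub); right; exists w'.
Qed.

Lemma join_stable : stable prefM prefW Wc join.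
Proof.
have J_match := join_matching; have [_ [_ J_inj2]] := J_match.
case: B_stable C_stable => [B_match B_noblock] [C_match C_noblock].
have [B_W _] := B_match; have [_ [C_inj1 _]] := C_match.
split=> // u w [wWc [uwNJ [want wwant]]].
have [wantB wantC] := join_man_wants want.
have [/existsP[x /andP[xS xw]] | /existsPn notB] := boolP [exists x, (x \in S) && ((x, w) \in B)].
  have xwJ : (x, w) \in join by rewrite in_join xS.
  case: wwant => [/(_ x) | [u' [u'wJ pref]]]; first by rewrite xwJ.
  case: (J_inj2 _ _ u'wJ xwJ erefl) pref => -> pref.
  apply: (B_noblock u w); split; first exact: B_W xw.
  by split; [exact: man_wants_notin B_match wantB | split=> //; right; exists x].
suff wwantC : woman_wants prefW C w u.
  by apply: (C_noblock u w); do !split => //; exact: man_wants_notin C_match wantC.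
case: wwant => [unmJ | [u' [u'wJ pref]]].
  left=> v; apply/negP=> vw; case: (boolP (v \in S)) => vS.
    have [w1 vw1 [x xS xw1]] := improver_matched_in_C vS.
    by case: (C_inj1 _ _ vw1 vw erefl) xw1 => -> xw; move: (notB x); rewrite xS xw.
  by move: (unmJ v); rewrite in_join (negbTE vS) vw.
right; exists u'; split=> //; move: u'wJ; rewrite in_join.
by case: ifP => // u'S u'w; move: (notB u'); rewrite u'S u'w.
Qed.

Lemma join_dominates : men_dominates prefM join C.
Proof.
have [_ [C_inj1 _]] := C_stable.1.
move=> u w' uw'; case: (boolP (u \in S)) => uS.
  2: by exists w'; rewrite in_join (negbTE uS); split=> //; left.
have [w0 uw0 [/(_ w') | [c [uc pref]]]] := improversP _ _ _ uS; first by rewrite uw'.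
exists w0; rewrite in_join uS; split=> //.
by case: (C_inj1 _ _ uc uw' erefl) pref => ->; right.
Qed.

End Join.

Lemma card_diff_join (Wt Wc : {set W}) (A B C : {set U * W}) :
  stable prefM prefW Wt A -> stable prefM prefW Wt B -> is_matching Wc C ->
  men_dominates prefM B A ->
  #|B :\: join B C| <= #|A :\: C|.
Proof.
move=> A_stable B_stable [_ [C_inj1 _]] dom.
have [B_match _] := B_stable; have [A_match _] := A_stable; have [_ [B_inj1 _]] := B_match.
rewrite -(card_matching_men B_match (subsetDl _ _)) -(card_matching_men A_match (subsetDl _ _)).
apply: subset_leq_card; apply/subsetP=> _ /imsetP[[u b] /setDP[ub ubNJ] ->] /=.
move: ubNJ; rewrite in_join ub; case: ifPn => // uNS ubNC.
have nwant : ~ man_wants prefM C u b.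
  by move=> want; move/negP: uNS; apply; apply/improversP; exists b.
have [c uc pref_cb] := not_man_wants nwant.
have cNb : c != b by apply: contraTneq uc => ->.
have c_gt_b : prefM u c b by rewrite (strict_totalN (prefM_sto u)) // eq_sym.
have [a ua] : exists a, (u, a) \in A.
  have [/existsP[a ua] | /existsPn unmA] := boolP [exists a, (u, a) \in A]; first by exists a.
  have uS : u \in improvers B A by apply/improversP; exists b => //; left.
  by have [a ua _] := improver_matched_in_C B_stable A_stable (subxx _) uS; exists a.
have [b' [ub' b'_ge_a]] := dom _ _ ua; case: (B_inj1 _ _ ub' ub erefl) b'_ge_a => -> b_ge_a.
have c_gt_a : prefM u c a.
  by case: b_ge_a => [<- // | b_gt_a]; exact: strict_total_trans (prefM_sto u) _ _ _ c_gt_b b_gt_a.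
have uaNC : (u, a) \notin C.
  apply/negP=> uaC; case: (C_inj1 _ _ uaC uc erefl) c_gt_a => ->.
  by rewrite (negbTE (strict_total_irr (prefM_sto u) c)).
by apply/imsetP; exists (u, a); rewrite // inE uaNC.
Qed.

Section JoinChain.
Variables (T : nat) (Ws : nat -> {set W}) (M : nat -> {set U * W}) (M1' : {set U * W}).
Hypothesis Ws_nested : forall t, 1 <= t -> t < T -> Ws t \subset Ws t.+1.
Hypothesis M_stable : forall t, 1 <= t <= T -> stable prefM prefW (Ws t) (M t).
Hypothesis M1'_stable : stable prefM prefW (Ws 1) M1'.
Hypothesis M1'_dominates : men_dominates prefM M1' (M 1).

Fixpoint join_chain (t : nat) : {set U * W} :=
  if t is t'.+1 then (if t' is 0 then M1' else join (join_chain t') (M t)) else M1'.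

Lemma join_chainS t : 1 <= t -> join_chain t.+1 = join (join_chain t) (M t.+1).
Proof. by case: t. Qed.

Lemma join_chain_stable_dominates t :
  1 <= t <= T ->
  stable prefM prefW (Ws t) (join_chain t) /\ men_dominates prefM (join_chain t) (M t).
Proof.
elim: t => [// | [_ _ | t IH /andP[_ lt_tT]]]; first by split.
have [chain_stable _] := IH (ltnW lt_tT).
have Mt_stable := M_stable (t := t.+2) lt_tT.
rewrite join_chainS //; split; last exact: join_dominates Mt_stable.
exact: join_stable chain_stable Mt_stable (Ws_nested _ lt_tT).
Qed.

Lemma join_chain_cost :
  \sum_(1 <= t < T) #|join_chain t :\: join_chain t.+1| <= \sum_(1 <= t < T) #|M t :\: M t.+1|.
Proof.
rewrite big_nat_cond [X in _ <= X]big_nat_cond; apply: leq_sum => t /andP[/andP[ge1_t lt_tT] _].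
have ht : 1 <= t <= T by rewrite ge1_t (ltnW lt_tT).
have [chain_stable chain_dom] := join_chain_stable_dominates ht.
rewrite join_chainS //.
exact: card_diff_join (M_stable ht) chain_stable (M_stable (t := t.+1) lt_tT).1 chain_dom.
Qed.

End JoinChain.

End Marriage.

Theorem lemma6 (U W : finType) (T : nat) (hT : 2 <= T)
  (Ws : nat -> {set W})
  (hnest : forall t, 1 <= t -> t < T -> Ws t \subset Ws t.+1)
  (prefM : U -> rel W) (prefW : W -> rel U)
  (hprefM : forall u, strict_total_order (prefM u))
  (hprefW : forall w, strict_total_order (prefW w))
  (M : nat -> {set U * W})
  (hM : forall t, 1 <= t <= T -> stable prefM prefW (Ws t) (M t))
  (M1' : {set U * W})
  (hM1' : stable prefM prefW (Ws 1) M1')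
  (hdom : men_dominates prefM M1' (M 1)) :
  exists M' : nat -> {set U * W},
    M' 1 = M1' /\
    (forall t, 2 <= t <= T -> stable prefM prefW (Ws t) (M' t)) /\
    \sum_(1 <= t < T) #|M' t :\: M' t.+1| <= \sum_(1 <= t < T) #|M t :\: M t.+1|.
Proof.
exists (join_chain prefM M M1'); split=> //; split.
  move=> t /andP[ge2_t le_tT]; have ht : 1 <= t <= T by rewrite le_tT (ltnW ge2_t).
  exact: (join_chain_stable_dominates hprefM hprefW hnest hM hM1' hdom ht).1.
exact: (join_chain_cost hprefM hprefW hnest hM hM1' hdom).
Qed.
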